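(* Fix $x_0\in\mathbb{R}^{n_x}$. There exist a finite positive constant $\alpha_1(x_0)$ and, for each $i\in\{2,\dots,T\}$, a finite set $\mathcal{K}_i$ of sequences of non-negative integers of length $i-1$ and finite positive constants $\alpha_i^{(j_1,\dots,j_{i-1})}(x_0)$ (depending on $x_0$ and $(j_1,\dots,j_{i-1})$ but not on the observations or the control) such that for every control $u\in U$ and every sequence of observations $(y_1,\dots,y_T)$, the solution of the hybrid system starting at $x_0$ satisfies $\|x_1(t)\|_2\le\alpha_1(x_0)$ for all $t\in[0,1]$, and for all $i\in\{2,\dots,T\}$ and $t\in[i-1,i]$, $$\|x_i(t)\|_2\le\sum_{(j_1,\dots,j_{i-1})\in\mathcal{K}_i}\alpha_i^{(j_1,\dots,j_{i-1})}(x_0)\prod_{m=1}^{i-1}\|y_m\|_2^{j_m}.$$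
   Context: Fix positive integers $T,m,n_x,n_y$ and $\rho_{\max}\in(0,\infty)$; $B(0,\rho_{\max})$ is the closed Euclidean ball of radius $\rho_{\max}$ in $\mathbb{R}^m$; $U$ is the set of piecewise continuous $u:[0,T]\to\mathbb{R}^m$ with $\|u(t)\|_2\le\rho_{\max}$ for all $t$. $f:\mathbb{R}^{n_x}\times\mathbb{R}^m\to\mathbb{R}^{n_x}$ is continuously differentiable and there is $K_1\in[1,\infty)$ with $\|f(x',u')-f(x'',u'')\|_2\le K_1(\|x'-x''\|_2+\|u'-u''\|_2)$ for all $x',x''\in\mathbb{R}^{n_x}$, $u',u''\in B(0,\rho_{\max})$. $g:\mathbb{R}^{n_x}\times\mathbb{R}^{n_y}\to\mathbb{R}^{n_x}$ is continuous and differentiable in its first argument, and there are $K_2,\dots,K_5\ge0$ and positive integers $L_1,L_2$ such that for all $x,y$ both $\|g(x,y)\|_2$ and $\|\frac{\partial}{\partial x}g(x,y)\|_2$ are at most $K_2+K_3\|x\|_2^{L_1}+K_4\|y\|_2^{L_2}+K_5\|x\|_2^{L_1}\|y\|_2^{L_2}$. The hybrid system: $x_1$ on $[0,1]$ solves $\dot x_1=f(x_1,u)$, $x_1(0)=x_0$; for $i=2,\dots,T$, $x_i$ on $[i-1,i]$ solves $\dot x_i(t)=f(x_i(t),u(t))$ with $x_i(i-1)=g(x_{i-1}(i-1),y_{i-1})$; $x(t)=x_i(t)$ for $t\in[i-1,i)$, and $x(T)=g(x_T(T),y_T)$. *)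

From HB Require Import structures.
From mathcomp Require Import all_boot all_order all_algebra.
From mathcomp Require Import all_classical all_reals all_analysis.
Set Implicit Arguments. Unset Strict Implicit. Unset Printing Implicit Defensive.
Import Order.TTheory GRing.Theory Num.Theory.
Import numFieldNormedType.Exports.
Local Open Scope classical_set_scope.
Local Open Scope ring_scope.

Definition norm2 {R : realType} {n : nat} (v : 'rV[R]_n) : R :=
  Num.sqrt (\sum_(i < n) (v ord0 i) ^+ 2).

Definition piecewise_continuous {R : realType} {m : nat} (T : R)
    (u : R -> 'rV[R]_m) : Prop :=
  exists s : seq R,
    (forall t, 0 <= t <= T -> t \notin s ->
       {for t, {within `[0, T], continuous u}}) /\
    (forall t, t \in s -> 0 <= t <= T ->
       (t < T -> exists l : 'rV[R]_m, u x @[x --> t^'+] --> l) /\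
       (0 < t -> exists l : 'rV[R]_m, u x @[x --> t^'-] --> l)).

Definition admissible {R : realType} {m : nat} (T rho : R)
    (u : R -> 'rV[R]_m) : Prop :=
  piecewise_continuous T u /\ (forall t, 0 <= t <= T -> norm2 (u t) <= rho).

(* x solves  x'(t) = f(x(t), u(t))  on [a,b] (classical solution for a
   piecewise continuous control): x continuous on [a,b] and differentiable
   with derivative f(x t, u t) at every t in (a,b) outside a finite set. *)
Definition solves_on {R : realType} {nx m : nat}
    (f : 'rV[R]_nx -> 'rV[R]_m -> 'rV[R]_nx) (u : R -> 'rV[R]_m)
    (a b : R) (x : R -> 'rV[R]_nx) : Prop :=
  {within `[a, b], continuous x} /\
  exists s : seq R, forall t, a < t < b -> t \notin s ->
    is_derive t 1 x (f (x t) (u t)).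

(* The hybrid system: xs i is the piece x_i on [i-1, i], i = 1..T. *)
Definition hybrid_solution {R : realType} {nx m ny : nat} (T : nat)
    (f : 'rV[R]_nx -> 'rV[R]_m -> 'rV[R]_nx)
    (g : 'rV[R]_nx -> 'rV[R]_ny -> 'rV[R]_nx)
    (x0 : 'rV[R]_nx) (u : R -> 'rV[R]_m) (y : nat -> 'rV[R]_ny)
    (xs : nat -> R -> 'rV[R]_nx) : Prop :=
  xs 1%N 0 = x0 /\ solves_on f u 0 1 (xs 1%N) /\
  forall i : nat, (2 <= i <= T)%N ->
    xs i (i.-1)%:R = g (xs i.-1 (i.-1)%:R) (y i.-1) /\
    solves_on f u (i.-1)%:R i%:R (xs i).

(* On a unit interval the flow can only amplify the state affinely: the
   Lipschitz bound on f and the bounded control give |f(x,u)|^2 <= A + B |x|^2,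
   so Gronwall's inequality for |x|^2 yields |x_i(t)| <= M |x_i(i-1)| + D.  The
   reset map g then bounds the next initial state polynomially in |x_{i-1}(i-1)|
   and |y_{i-1}|.  By induction |x_{j+1}(t)| <= c_j W_j^{d_j}, where
   W_j = max(1, |y_1|, ..., |y_j|) and d_{j+1} = d_j L1 + L2, and finally
   W_j^d <= 1 + sum_k |y_k|^d, a sum over the multi-indices 0 and d e_k. *)

From HB Require Import structures.
From mathcomp Require Import all_boot all_order all_algebra.
From mathcomp Require Import all_classical all_reals all_analysis.
From mathcomp Require Import ring lra zify.
Import Order.TTheory GRing.Theory Num.Theory.
Import numFieldNormedType.Exports.
Local Open Scope classical_set_scope.
Local Open Scope ring_scope.

Section EuclideanNorm.
Context {R : realType} {n : nat}.
Implicit Types a b : 'rV[R]_n.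

Lemma norm2_ge0 a : 0 <= norm2 a.
Proof. exact: sqrtr_ge0. Qed.

Lemma sqr_norm2 a : norm2 a ^+ 2 = \sum_(i < n) a ord0 i ^+ 2.
Proof. by rewrite sqr_sqrtr // sumr_ge0 // => i _; rewrite sqr_ge0. Qed.

Lemma norm2_0 : norm2 (0 : 'rV[R]_n) = 0.
Proof. by rewrite /norm2 big1 ?sqrtr0 // => i _; rewrite mxE expr0n. Qed.

Lemma sqr_norm2D_le a b :
  norm2 (a + b) ^+ 2 <= 2 * norm2 a ^+ 2 + 2 * norm2 b ^+ 2.
Proof.
rewrite !sqr_norm2 !mulr_sumr -big_split /=; apply: ler_sum => i _.
by rewrite mxE; have := sqr_ge0 (a ord0 i - b ord0 i); nra.
Qed.

Lemma continuous_sqr_norm2 (A : set R) (x : R -> 'rV[R]_n) :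
  {within A, continuous x} -> {within A, continuous (fun s => norm2 (x s) ^+ 2)}.
Proof.
move=> cx; rewrite (_ : (fun s => _) = \sum_(i < n) (fun s => x s ord0 i ^+ 2)).
  apply: (big_ind (fun h => {within A, continuous h})) => [s|h1 h2 c1 c2 s|i _ s].
  - exact: cst_continuous.
  - exact: (@continuousD R R^o (subspace A) h1 h2 s (c1 s) (c2 s)).
  - have xi : {for s, continuous ((fun r : subspace A => x r ord0 i))}.
      exact: continuous_comp (cx s) (@coord_continuous R 1 n ord0 i (x s)).
    exact: (@continuousM R (subspace A) _ _ s xi xi).
by apply/funext => s; rewrite sqr_norm2 fct_sumE.
Qed.

Lemma is_derive_sqr_norm2 (x : R -> 'rV[R]_n) (t : R) (D : 'rV[R]_n) :
  is_derive t 1 x D ->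
  is_derive t 1 (fun s => norm2 (x s) ^+ 2) (2 * \sum_(i < n) x t ord0 i * D ord0 i).
Proof.
move=> [dx xD]; have dxi i : is_derive t 1 (fun s => x s ord0 i) (D ord0 i).
  apply: DeriveDef; first exact: (derivable_mxP _ _ _).1 dx ord0 i.
  by rewrite -xD (derive_mx dx) mxE.
have dxi2 i : is_derive t 1 (fun s => x s ord0 i ^+ 2) (2 * (x t ord0 i * D ord0 i)).
  have [d2 e2] := is_deriveX 2 (dxi i).
  by apply: DeriveDef; [exact: d2 | rewrite e2 /= expr1 mulrA].
rewrite (_ : (fun s => _) = fun s => \sum_(i < n) x s ord0 i ^+ 2); last first.
  by apply/funext => s; rewrite sqr_norm2.
have := is_derive_sum dxi2; rewrite fct_sumE -mulr_sumr => -[dsum esum].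
exact: DeriveDef.
Qed.

Lemma double_dot_le_sqr_norm2 a b :
  2 * \sum_(i < n) a ord0 i * b ord0 i <= norm2 a ^+ 2 + norm2 b ^+ 2.
Proof.
rewrite !sqr_norm2 mulr_sumr -big_split /=; apply: ler_sum => i _.
by have := sqr_ge0 (a ord0 i - b ord0 i); nra.
Qed.

End EuclideanNorm.

Section ScalarGronwall.
Context {R : realType}.

Lemma derive_le0_le_fin (f df : R -> R) (s : seq R) (a b : R) : a <= b ->
  {within `[a, b], continuous f} ->
  (forall t, a < t < b -> t \notin s -> is_derive t 1 f (df t) /\ df t <= 0) ->
  f b <= f a.
Proof.
elim: s a b => [|p s IH] a b ab cf df_le0.
  case: ltgtP ab => // [altb|->] _; last exact: lexx.
  have in_ab r : r \in `]a, b[ -> a < r < b by rewrite in_itv.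
  have [c /in_ab cab fba] := MVT altb (fun r rab => (df_le0 r (in_ab r rab) isT).1) cf.
  rewrite -subr_le0 fba mulr_le0_ge0 ?(df_le0 c cab isT).2 //.
  by rewrite subr_ge0 ltW.
have df_le0' r : a < r < b -> r != p -> r \notin s -> is_derive r 1 f (df r) /\ df r <= 0.
  by move=> rab rp rs; apply: df_le0; rewrite // in_cons negb_or rp.
have [/andP[ap pb]|pab] := boolP (a < p < b); last first.
  apply: IH => // r rab; apply: df_le0' => //.
  by apply: contraNneq pab => <-.
have cf' c d : a <= c -> d <= b -> {within `[c, d], continuous f}.
  by move=> ac db; apply: continuous_subspaceW cf; apply: subset_itv; rewrite bnd_simp.
apply: (@le_trans _ _ (f p)).
  apply: IH (ltW pb) (cf' _ _ (ltW ap) (lexx b)) _ => r /andP[pr rb] rs.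
  by apply: df_le0' => //; [rewrite (lt_trans ap pr) | rewrite gt_eqF].
apply: IH (ltW ap) (cf' _ _ (lexx a) (ltW pb)) _ => r /andP[ar rp] rs.
by apply: df_le0' => //; [rewrite ar (lt_trans rp pb) | rewrite lt_eqF].
Qed.

Lemma gronwall_fin (W dW : R -> R) (s : seq R) (k a b : R) : a <= b ->
  {within `[a, b], continuous W} ->
  (forall t, a < t < b -> t \notin s -> is_derive t 1 W (dW t) /\ dW t <= k * W t) ->
  forall t, a <= t <= b -> W t <= W a * expR (k * (t - a)).
Proof.
move=> ab cW dW_le t /andP[at_ tb].
pose e r := expR (- (k * r)).
have e_gt0 r : 0 < e r by apply: expR_gt0.
have de (r : R) : is_derive r (1 : R) e (e r * - k).
  have dlin : is_derive r (1 : R) (fun r : R => - (k * r)) (- k).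
    have [d dk] := is_deriveN (is_deriveZ k (is_derive_id r 1)).
    by apply: DeriveDef; [exact: d | rewrite dk -[k%:A]/(k * 1) mulr1].
  by have [de1 de2] := is_derive1_comp (is_derive_expR _) dlin; apply: DeriveDef de1 de2.
have We_le : W t * e t <= W a * e a.
  apply: (derive_le0_le_fin (fun r => W r * e r)
    (fun r => W r * (e r * - k) + e r * dW r) s a t at_).
    have cWt : {within `[a, t], continuous W}.
      by apply: continuous_subspaceW cW; apply: subset_itv; rewrite bnd_simp.
    move=> r; apply: (@continuousM R (subspace `[a, t])); first exact: cWt.
    apply: (@continuous_subspaceT _ _ _ e) => {}r.
    by apply/differentiable_continuous/derivable1_diffP; case: (de r).
  move=> r /andP[ar rt] rs.
  have [dWr dWr_le] := dW_le r ltac:(by rewrite ar (lt_le_trans rt tb)) rs.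
  have [dWe dWe_val] := is_deriveM dWr (de r).
  split; first exact: DeriveDef.
  by have := e_gt0 r; nra.
have -> : W a * expR (k * (t - a)) = W a * e a / e t.
  by rewrite /e -!expRN -mulrA -expRD opprK; congr (_ * expR _); ring.
by rewrite ler_pdivlMr.
Qed.

End ScalarGronwall.

Section VectorGronwall.
Context {R : realType} {n : nat}.
Variables (x F : R -> 'rV[R]_n) (s : seq R) (A B a b : R).
Hypotheses (A_ge0 : 0 <= A) (B_ge0 : 0 <= B) (ab : a <= b).
Hypothesis x_cont : {within `[a, b], continuous x}.
Hypothesis x_derive : forall t, a < t < b -> t \notin s ->
  is_derive t 1 x (F t) /\ norm2 (F t) ^+ 2 <= A + B * norm2 (x t) ^+ 2.

Lemma sqr_norm2_gronwall t : a <= t <= b ->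
  norm2 (x t) ^+ 2 + A <= (norm2 (x a) ^+ 2 + A) * expR ((1 + B) * (t - a)).
Proof.
apply: (gronwall_fin (fun t => norm2 (x t) ^+ 2 + A)
  (fun t => 2 * \sum_(i < n) x t ord0 i * F t ord0 i) s (1 + B) a b ab).
  move=> r; apply: (@continuousD R R^o (subspace `[a, b])
    (fun t => norm2 (x t) ^+ 2) (fun=> A)).
    exact: continuous_sqr_norm2.
  exact: cst_continuous.
move=> r rab rs; have [dx F_le] := x_derive _ rab rs; split.
  have [dV V_val] := is_deriveD (is_derive_sqr_norm2 _ _ _ dx) (is_derive_cst A r 1).
  by apply: DeriveDef dV _; rewrite V_val addr0.
(* 2 <x, F> <= |x|^2 + |F|^2 <= A + (1 + B) |x|^2 <= (1 + B) (|x|^2 + A) *)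
have := double_dot_le_sqr_norm2 (x r) (F r).
have := mulr_ge0 A_ge0 B_ge0; have := sqr_ge0 (norm2 (x r)); rewrite /=; nra.
Qed.

Lemma norm2_unit_interval_le : b <= a + 1 -> forall t, a <= t <= b ->
  norm2 (x t) <= expR (1 + B) * (norm2 (x a) + A + 1).
Proof.
move=> ba1 t tab; have gron := sqr_norm2_gronwall _ tab; case/andP: tab => at_ tb.
set E := expR (1 + B).
have E_ge1 : 1 <= E by have := expR_ge1Dx (1 + B); have := B_ge0; rewrite /E; lra.
have exp_le : expR ((1 + B) * (t - a)) <= E.
  by rewrite ler_expR; have := B_ge0; nra.
have := norm2_ge0 (x t); have := norm2_ge0 (x a).
set q := norm2 (x t) in gron *; set p := norm2 (x a) in gron * => p_ge0 q_ge0.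
have q2_le : q ^+ 2 <= (p ^+ 2 + A) * E.
  apply: le_trans (_ : (p ^+ 2 + A) * expR ((1 + B) * (t - a)) <= _).
    by have := A_ge0; lra.
  by rewrite ler_wpM2l // addr_ge0 ?sqr_ge0.
have affine_le : p ^+ 2 + A <= (p + A + 1) ^+ 2 by have := A_ge0; nra.
have E_ge0 : 0 <= E by lra.
rewrite -(ler_pXn2r (_ : 0 < 2)%N) ?nnegrE ?mulr_ge0 //; last by have := A_ge0; lra.
apply: (le_trans q2_le); rewrite exprMn mulrC.
by apply: ler_pM => //; [exact: addr_ge0 (sqr_ge0 p) A_ge0 | nra].
Qed.

End VectorGronwall.

Section ObservationPolynomial.
Context {R : realType}.
Variables (K2 K3 K4 K5 : R) (L1 L2 : nat).
Hypotheses (K2_ge0 : 0 <= K2) (K3_ge0 : 0 <= K3) (K4_ge0 : 0 <= K4) (K5_ge0 : 0 <= K5).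

Definition gpoly (z w : R) : R :=
  K2 + K3 * z ^+ L1 + K4 * w ^+ L2 + K5 * z ^+ L1 * w ^+ L2.

Lemma gpoly_ge0 z w : 0 <= z -> 0 <= w -> 0 <= gpoly z w.
Proof.
by move=> z_ge0 w_ge0; rewrite /gpoly !addr_ge0 ?mulr_ge0 ?exprn_ge0.
Qed.

Lemma gpoly_le_pow (C z w Om : R) (N : nat) :
  0 <= z -> 0 <= w -> 1 <= Om -> z <= C * Om ^+ N -> w <= Om ->
  gpoly z w <= gpoly C 1 * Om ^+ (N * L1 + L2).
Proof.
move=> z_ge0 w_ge0 Om_ge1 zC wOm.
have Om_ge0 : 0 <= Om by lra.
set P := Om ^+ (N * L1); set Q := Om ^+ L2.
have P_ge1 : 1 <= P by apply: exprn_ege1.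
have Q_ge1 : 1 <= Q by apply: exprn_ege1.
have zP : z ^+ L1 <= C ^+ L1 * P.
  by rewrite /P exprM -exprMn; apply: lerXn2r; rewrite ?nnegrE ?(le_trans z_ge0).
have wQ : w ^+ L2 <= Q by apply: lerXn2r; rewrite ?nnegrE.
have := exprn_ge0 L1 z_ge0; have := exprn_ge0 L2 w_ge0.
rewrite /gpoly expr1n !mulr1 exprD -/P -/Q.
set Z := z ^+ L1 in zP *; set W := w ^+ L2 in wQ *; set CC := C ^+ L1 in zP *.
move=> W_ge0 Z_ge0.
have ZPQ : Z <= CC * P * Q.
  by apply: (le_trans zP); rewrite ler_peMr // (le_trans Z_ge0 zP).
have WPQ : W <= P * Q by apply: (le_trans wQ); rewrite ler_peMl //; lra.
have ZW : Z * W <= CC * P * Q by apply: ler_pM.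
have PQ_ge1 : 1 <= P * Q by rewrite -[1]mulr1 ler_pM.
have := ler_wpM2l K2_ge0 PQ_ge1; have := ler_wpM2l K3_ge0 ZPQ.
have := ler_wpM2l K4_ge0 WPQ; have := ler_wpM2l K5_ge0 ZW.
rewrite -!mulrA; lra.
Qed.

End ObservationPolynomial.

Section RunningMax.
Context {R : realType}.
Implicit Type w : nat -> R.

Fixpoint runmax w (j : nat) : R :=
  if j is j'.+1 then Num.max (runmax w j') (w j') else 1.

Lemma runmax_ge1 w j : 1 <= runmax w j.
Proof. by elim: j => [|j IH] //=; rewrite le_max IH. Qed.

Lemma runmax_expn_le w (p j : nat) : (forall k, 0 <= w k) ->
  runmax w j ^+ p <= 1 + \sum_(k < j) w k ^+ p.
Proof.
move=> w_ge0; elim: j => [|j IH] /=; first by rewrite expr1n big_ord0 addr0.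
rewrite big_ord_recr /= addrA.
have wj_ge0 := exprn_ge0 p (w_ge0 j).
have [_|_] := leP (runmax w j) (w j); last by lra.
suff : 0 <= 1 + \sum_(k < j) w k ^+ p by lra.
by rewrite addr_ge0 // sumr_ge0 // => k _; rewrite exprn_ge0.
Qed.

End RunningMax.

(* [unit_exps len N k] is the multi-index N e_k of length len; k = len gives
   the zero multi-index. *)
Definition unit_exps (len N k : nat) : seq nat :=
  mkseq (fun l => if l == k then N else 0%N) len.

Definition unit_exps_family (len N : nat) : seq (seq nat) :=
  [seq unit_exps len N k | k <- iota 0 len.+1].

Lemma uniq_unit_exps_family len N : uniq (unit_exps_family len N.+1).
Proof.
rewrite map_inj_in_uniq ?iota_uniq // => k1 k2; rewrite !mem_iota /= => k1_le k2_le e.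
have nth_e l : (l < len)%N -> (l == k1) = (l == k2).
  move=> l_lt; have := congr1 (fun s => nth 0%N s l) e.
  by rewrite /unit_exps !nth_mkseq //; do 2 case: eqP.
have [k1_lt|k1_ge] := ltnP k1 len.
  by have := nth_e k1 k1_lt; rewrite eqxx => /esym/eqP.
have [k2_lt|k2_ge] := ltnP k2 len.
  by have := nth_e k2 k2_lt; rewrite eqxx => /eqP.
lia.
Qed.

Lemma sum_unit_exps_family {R : realType} (w : nat -> R) (len N : nat) (al : R) :
  \sum_(s <- unit_exps_family len N) al * \prod_(k < len) w k ^+ nth 0%N s k
  = al * (1 + \sum_(k < len) w k ^+ N).
Proof.
rewrite big_map -mulr_sumr -[iota 0 len.+1]/(index_iota 0 len.+1).
rewrite big_nat_recr //= addrC big_mkord; congr (al * (_ + _)).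
  by rewrite big1 // => l _; rewrite /unit_exps nth_mkseq // ltn_eqF.
apply: eq_bigr => k _; rewrite (bigD1 k) //= big1 => [|l lk].
  by rewrite /unit_exps nth_mkseq // eqxx mulr1.
by rewrite /unit_exps nth_mkseq // ifN.
Qed.

Fixpoint bound_degree (L1 L2 j : nat) : nat :=
  if j is j'.+1 then (bound_degree L1 L2 j' * L1 + L2)%N else 0%N.

Section HybridBound.
Context {R : realType} {nx m ny : nat}.
Variables (f : 'rV[R]_nx -> 'rV[R]_m -> 'rV[R]_nx).
Variables (g : 'rV[R]_nx -> 'rV[R]_ny -> 'rV[R]_nx).
Variables (rho K1 K2 K3 K4 K5 : R) (L1 L2 : nat).
Hypothesis rho_ge0 : 0 <= rho.
Hypothesis f_lipschitz : forall (x' x'' : 'rV[R]_nx) (u' u'' : 'rV[R]_m),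
  norm2 u' <= rho -> norm2 u'' <= rho ->
  norm2 (f x' u' - f x'' u'') <= K1 * (norm2 (x' - x'') + norm2 (u' - u'')).
Hypotheses (K2_ge0 : 0 <= K2) (K3_ge0 : 0 <= K3) (K4_ge0 : 0 <= K4) (K5_ge0 : 0 <= K5).
Hypothesis g_le :
  forall x y, norm2 (g x y) <= gpoly K2 K3 K4 K5 L1 L2 (norm2 x) (norm2 y).

Let fA := 4 * (K1 * rho) ^+ 2 + 2 * norm2 (f 0 0) ^+ 2.
Let fB := 4 * K1 ^+ 2.
Let M := expR (1 + fB).
Let D := M * (fA + 1).

Let fA_ge0 : 0 <= fA.
Proof.
by rewrite /fA; have := sqr_ge0 (K1 * rho); have := sqr_ge0 (norm2 (f 0 0)); lra.
Qed.

Let fB_ge0 : 0 <= fB.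
Proof. by rewrite /fB; have := sqr_ge0 K1; lra. Qed.

Let M_ge0 : 0 <= M.
Proof. exact: expR_ge0. Qed.

Let D_ge0 : 0 <= D.
Proof. by rewrite /D mulr_ge0 // addr_ge0. Qed.

Lemma sqr_norm2_f_le x u : norm2 u <= rho -> norm2 (f x u) ^+ 2 <= fA + fB * norm2 x ^+ 2.
Proof.
move=> u_le; have := f_lipschitz x 0 u 0 u_le.
rewrite norm2_0 !subr0 => /(_ rho_ge0) f_le.
have := sqr_norm2D_le (f x u - f 0 0) (f 0 0); rewrite subrK.
have := norm2_ge0 x; have := norm2_ge0 u; have := norm2_ge0 (f x u - f 0 0).
set d := norm2 (f x u - f 0 0); set X := norm2 x; set U := norm2 u => d_ge0 U_ge0 X_ge0.
have d2_le : d ^+ 2 <= K1 ^+ 2 * (X + rho) ^+ 2.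
  apply: le_trans (_ : (K1 * (X + U)) ^+ 2 <= _).
    by apply: lerXn2r; rewrite ?nnegrE // (le_trans d_ge0).
  rewrite exprMn ler_wpM2l ?sqr_ge0 //.
  by apply: lerXn2r; rewrite ?nnegrE ?lerD2l ?addr_ge0.
have := sqr_ge0 (K1 * (X - rho)); rewrite /fA /fB; nra.
Qed.

Lemma solves_on_unit_le {u : R -> 'rV[R]_m} {a : R} {xi : R -> 'rV[R]_nx} :
  (forall t, a <= t <= a + 1 -> norm2 (u t) <= rho) ->
  solves_on f u a (a + 1) xi ->
  forall t, a <= t <= a + 1 -> norm2 (xi t) <= M * norm2 (xi a) + D.
Proof.
move=> u_le [xi_cont [s xi_derive]] t tab.
have -> : M * norm2 (xi a) + D = M * (norm2 (xi a) + fA + 1) by rewrite /D; ring.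
apply: (@norm2_unit_interval_le R nx xi (fun r => f (xi r) (u r)) s fA fB a (a + 1))
  => //.
- by rewrite lerDl.
- move=> r /andP[ar rb] rs; split; first by apply: xi_derive; rewrite ?ar.
  by apply/sqr_norm2_f_le/u_le; rewrite !ltW.
Qed.

Fixpoint piece_coef (x0 : 'rV[R]_nx) (j : nat) : R :=
  if j is j'.+1 then M * gpoly K2 K3 K4 K5 L1 L2 (piece_coef x0 j') 1 + D
  else M * norm2 x0 + D.

Lemma piece_coef_ge0 x0 j : 0 <= piece_coef x0 j.
Proof.
elim: j => [|j IH] /=; apply: addr_ge0 => //; apply: mulr_ge0 => //.
  exact: norm2_ge0.
exact: gpoly_ge0.
Qed.

Lemma hybrid_solution_le (T : nat) (x0 : 'rV[R]_nx) (u : R -> 'rV[R]_m)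
    (y : nat -> 'rV[R]_ny) (xs : nat -> R -> 'rV[R]_nx) :
  admissible T%:R rho u -> hybrid_solution T f g x0 u y xs ->
  forall j, (j < T)%N -> forall t, j%:R <= t <= j.+1%:R ->
  norm2 (xs j.+1 t)
    <= piece_coef x0 j * runmax (fun k => norm2 (y k.+1)) j ^+ bound_degree L1 L2 j.
Proof.
move=> [_ u_le] [xs1_0 [xs1_sol xs_step]].
have u_le_on j : (j < T)%N -> forall t, j%:R <= t <= j%:R + 1 -> norm2 (u t) <= rho.
  move=> jT t /andP[jt tj]; apply: u_le; rewrite (le_trans _ jt) //=.
  by rewrite (le_trans tj) // natr1 ler_nat.
set w := fun k => norm2 (y k.+1).
elim=> [|j IH] jT t tj.
  rewrite expr0 mulr1 /= -xs1_0.
  have tj' : 0 <= t <= 0 + 1 by rewrite add0r.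
  have xs1_sol' : solves_on f u 0 (0 + 1) (xs 1%N) by rewrite add0r.
  exact: (solves_on_unit_le (u_le_on 0%N jT) xs1_sol' _ tj').
have [xs_jump xs_sol] := xs_step j.+2 jT; rewrite /= in xs_jump xs_sol.
rewrite -[j.+2%:R]natr1 in xs_sol tj.
apply: (le_trans (solves_on_unit_le (u_le_on _ jT) xs_sol _ tj)).
rewrite xs_jump /= -/(bound_degree L1 L2 j) -/(piece_coef x0 j).
set d := bound_degree L1 L2 j; set W := runmax w j.+1.
have W_ge1 : 1 <= W := runmax_ge1 w j.+1.
have z_le : norm2 (xs j.+1 j.+1%:R) <= piece_coef x0 j * W ^+ d.
  apply: le_trans (IH (ltnW jT) j.+1%:R _) _; first by rewrite ler_nat leqnSn lexx.
  have runmax_ge0 k : 0 <= runmax w k := le_trans ler01 (runmax_ge1 w k).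
  rewrite ler_wpM2l ?piece_coef_ge0 // lerXn2r ?nnegrE ?runmax_ge0 //.
  by rewrite /W /= le_max lexx.
have wj_le : w j <= W by rewrite /W /= le_max lexx orbT.
have g_le' := le_trans (g_le _ _) (gpoly_le_pow _ _ _ _ L1 L2 K2_ge0 K3_ge0 K4_ge0 K5_ge0
  _ _ _ _ _ (norm2_ge0 _) (norm2_ge0 _) W_ge1 z_le wj_le).
have D_le : D <= D * W ^+ (d * L1 + L2) by rewrite ler_peMr // exprn_ege1.
by rewrite mulrDl -mulrA lerD // ler_wpM2l.
Qed.

End HybridBound.

(* The exponent d.+1 keeps the multi-indices distinct even when d = 0. *)
Lemma runmax_expn_le_unit_exps {R : realType} (w : nat -> R) (c : R) (j d : nat) :
  0 <= c -> (forall k, 0 <= w k) ->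
  c * runmax w j ^+ d
    <= \sum_(s <- unit_exps_family j d.+1) (c + 1) * \prod_(k < j) w k ^+ nth 0%N s k.
Proof.
move=> c_ge0 w_ge0; rewrite sum_unit_exps_family.
have Om_ge1 := runmax_ge1 w j.
apply: ler_pM; rewrite ?exprn_ge0 ?lerDl //; first exact: le_trans Om_ge1.
apply: le_trans (runmax_expn_le w d.+1 j w_ge0).
exact: ler_weXn2l.
Qed.

Theorem proposition6 (R : realType) (T m nx ny : nat) (rho_max : R)
  (f : 'rV[R]_nx -> 'rV[R]_m -> 'rV[R]_nx)
  (g : 'rV[R]_nx -> 'rV[R]_ny -> 'rV[R]_nx)
  (K1 K2 K3 K4 K5 : R) (L1 L2 : nat) (x0 : 'rV[R]_nx) :
  (0 < T)%N -> (0 < m)%N -> (0 < nx)%N -> (0 < ny)%N -> 0 < rho_max ->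
  (* f is continuously differentiable on R^nx x R^m *)
  (forall p : 'rV[R]_nx * 'rV[R]_m,
     differentiable (fun q : 'rV[R]_nx * 'rV[R]_m => f q.1 q.2) p) ->
  (forall v : 'rV[R]_nx * 'rV[R]_m,
     continuous (fun p : 'rV[R]_nx * 'rV[R]_m =>
       'd (fun q : 'rV[R]_nx * 'rV[R]_m => f q.1 q.2) p v)) ->
  (* Lipschitz condition *)
  1 <= K1 ->
  (forall (x' x'' : 'rV[R]_nx) (u' u'' : 'rV[R]_m),
     norm2 u' <= rho_max -> norm2 u'' <= rho_max ->
     norm2 (f x' u' - f x'' u'') <= K1 * (norm2 (x' - x'') + norm2 (u' - u''))) ->
  (* g continuous, differentiable in its first argument, polynomial bounds *)
  continuous (fun q : 'rV[R]_nx * 'rV[R]_ny => g q.1 q.2) ->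
  (forall (x : 'rV[R]_nx) (y : 'rV[R]_ny), differentiable (fun z => g z y) x) ->
  0 <= K2 -> 0 <= K3 -> 0 <= K4 -> 0 <= K5 -> (0 < L1)%N -> (0 < L2)%N ->
  (forall (x : 'rV[R]_nx) (y : 'rV[R]_ny),
     norm2 (g x y) <= K2 + K3 * norm2 x ^+ L1 + K4 * norm2 y ^+ L2
                      + K5 * norm2 x ^+ L1 * norm2 y ^+ L2) ->
  (* operator 2-norm of the Jacobian d/dx g(x,y) is bounded by the same *)
  (forall (x : 'rV[R]_nx) (y : 'rV[R]_ny) (v : 'rV[R]_nx),
     norm2 ('d (fun z => g z y) x v)
       <= (K2 + K3 * norm2 x ^+ L1 + K4 * norm2 y ^+ L2
           + K5 * norm2 x ^+ L1 * norm2 y ^+ L2) * norm2 v) ->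
  exists alpha1 : R, 0 < alpha1 /\
  exists (K : nat -> seq (seq nat)) (alpha : nat -> seq nat -> R),
    (forall i : nat, (2 <= i <= T)%N ->
       uniq (K i) /\
       forall j, j \in K i -> size j = i.-1 /\ 0 < alpha i j) /\
    forall (u : R -> 'rV[R]_m) (y : nat -> 'rV[R]_ny)
           (xs : nat -> R -> 'rV[R]_nx),
      admissible T%:R rho_max u ->
      hybrid_solution T f g x0 u y xs ->
      (forall t : R, 0 <= t <= 1 -> norm2 (xs 1%N t) <= alpha1) /\
      (forall (i : nat) (t : R), (2 <= i <= T)%N ->
         (i.-1)%:R <= t <= i%:R ->
         norm2 (xs i t)
           <= \sum_(j <- K i) alpha i j *
                \prod_(k < i.-1) norm2 (y k.+1) ^+ nth 0%N j k).
Proof.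
(* Only the Lipschitz bound on f and the growth bound on g matter here; the
   smoothness assumptions serve existence of solutions, which is given. *)
move=> T_gt0 _ _ _ rho_gt0 _ _ _ f_lip _ _ K2_ge0 K3_ge0 K4_ge0 K5_ge0 _ _ g_le _.
pose c := piece_coef f rho_max K1 K2 K3 K4 K5 L1 L2 x0.
have c_ge0 j : 0 <= c j by apply: piece_coef_ge0.
have bound := @hybrid_solution_le R nx m ny f g rho_max K1 K2 K3 K4 K5 L1 L2
  (ltW rho_gt0) f_lip K2_ge0 K3_ge0 K4_ge0 K5_ge0 g_le T x0.
exists (c 0%N + 1); split; first by have := c_ge0 0%N; lra.
exists (fun i => unit_exps_family i.-1 (bound_degree L1 L2 i.-1).+1).
exists (fun i _ => c i.-1 + 1).
split=> [i _|u y xs adm sol].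
  split; first exact: uniq_unit_exps_family.
  by move=> j /mapP[k _ ->]; rewrite size_mkseq; split=> //; have := c_ge0 i.-1; lra.
split=> [t t01|[|j] t //= ij tj].
  apply: (le_trans (bound _ _ _ adm sol 0%N T_gt0 t t01)).
  by rewrite expr0 mulr1 lerDl.
apply: (le_trans (bound _ _ _ adm sol j (andP ij).2 t tj)).
by apply: runmax_expn_le_unit_exps => // k; apply: norm2_ge0.
Qed.
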